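(* Let $\phi\in\mathrm{Diff}(\mathbb C^2,0)$ with $\phi(\xi)=\Lambda\xi+\mathrm{h.o.t.}$ ($\Lambda=\mathrm{diag}(\lambda,\lambda^{-1})$ or $\Lambda=-\sigma$), such that $\phi^{\circ p}=\exp(\hat{\bm X})$ is tangent to the identity, $\phi$ is reversed by $\sigma$ (i.e. $\sigma\circ\phi\circ\sigma=\phi^{\circ(-1)}$) and has the first integral $h=\xi_1\xi_2$. Let $f:=\frac{\xi_1\circ\phi^{\circ p}-\xi_1}{\xi_1}$ and let $s\in\mathbb Z_{\geq0}$ be maximal such that $h^s$ divides $f$. Then $$\hat{\bm X}=\frac{f\log(1+\bm E.f)}{\bm E.f}\,\bm E\mod h^{-s}f^2\bm E.$$
   Context: $\sigma(\xi)=(\xi_2,\xi_1)$, $\bm E=\xi_1\frac{\partial}{\partial\xi_1}-\xi_2\frac{\partial}{\partial\xi_2}$, $\bm E.f$ is the derivative of $f$ along $\bm E$. $\hat{\bm X}$ is the formal infinitesimal generator of $\phi^{\circ p}$: the unique formal vector field with vanishing linear part whose formal time-1 flow $\exp(\hat{\bm X})$ equals the Taylor series of $\phi^{\circ p}$. $\frac{f\log(1+\bm E.f)}{\bm E.f}$ denotes the formal series $f\sum_{n\geq1}\frac{(-1)^{n-1}}{n}(\bm E.f)^{n-1}$. ''mod $h^{-s}f^2\bm E$'' means the difference is $g\,h^{-s}f^2\bm E$ for some formal series $g$. *)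

From HB Require Import structures.
From mathcomp Require Import all_boot all_order all_algebra.
From mathcomp Require Import complex.
From mathcomp Require Import Rstruct.
Set Implicit Arguments. Unset Strict Implicit. Unset Printing Implicit Defensive.
Import Order.TTheory GRing.Theory Num.Theory.
Local Open Scope ring_scope.

Section FPS.
Variable K : fieldType.

(* A formal power series  F = sum_{i,j} F i j * xi1^i * xi2^j. *)
Definition fps := nat -> nat -> K.

Definition fpsC (c : K) : fps := fun i j => if (i == 0%N) && (j == 0%N) then c else 0.
Definition fps1 : fps := fpsC 1.
Definition xi1 : fps := fun i j => if (i == 1%N) && (j == 0%N) then 1 else 0.
Definition xi2 : fps := fun i j => if (i == 0%N) && (j == 1%N) then 1 else 0.
Definition fadd (F G : fps) : fps := fun i j => F i j + G i j.
Definition fopp (F : fps) : fps := fun i j => - F i j.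
Definition fsub (F G : fps) : fps := fadd F (fopp G).
Definition fmul (F G : fps) : fps := fun i j =>
  \sum_(a < i.+1) \sum_(b < j.+1) F a b * G (i - a)%N (j - b)%N.
Definition fpow (F : fps) (n : nat) : fps := iter n (fmul F) fps1.

Definition d1 (F : fps) : fps := fun i j => F i.+1 j *+ i.+1.
Definition d2 (F : fps) : fps := fun i j => F i j.+1 *+ j.+1.

(* substitution F(P, Q) for P, Q without constant term
   (for such P, Q the terms with a + b > i + j do not contribute) *)
Definition fcomp (F P Q : fps) : fps := fun i j =>
  \sum_(a < (i + j).+1) \sum_(b < (i + j).+1) F a b * fmul (fpow P a) (fpow Q b) i j.

Definition fmap := (fps * fps)%type.
Definition mcomp (Phi Psi : fmap) : fmap :=
  (fcomp Phi.1 Psi.1 Psi.2, fcomp Phi.2 Psi.1 Psi.2).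
Definition midm : fmap := (xi1, xi2).
Definition msigma : fmap := (xi2, xi1).
Definition miter (p : nat) (Phi : fmap) : fmap := iter p (mcomp Phi) midm.

(* linear part of a map: Phi(xi) = [[a, b], [c, d]] xi + h.o.t. *)
Definition linpart (Phi : fmap) (a b c d : K) : Prop :=
  [/\ Phi.1 1%N 0%N = a, Phi.1 0%N 1%N = b, Phi.2 1%N 0%N = c & Phi.2 0%N 1%N = d].

Definition vfield := (fps * fps)%type.
Definition lie (X : vfield) (F : fps) : fps := fadd (fmul X.1 (d1 F)) (fmul X.2 (d2 F)).
Definition vanishing_linear_part (X : vfield) : Prop :=
  [/\ X.1 0%N 0%N = 0 /\ X.2 0%N 0%N = 0,
      X.1 1%N 0%N = 0, X.1 0%N 1%N = 0, X.2 1%N 0%N = 0 & X.2 0%N 1%N = 0].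
(* Lie series  exp(X).F = sum_n X^n.F / n!  ; for X of order >= 2 and F
   without constant term, X^n.F has order >= n+1, so the sum is finite
   coefficientwise *)
Definition lie_exp (X : vfield) (F : fps) : fps := fun i j =>
  \sum_(n < (i + j).+1) (n`!%:R)^-1 * iter n (lie X) F i j.
Definition fexp (X : vfield) : fmap := (lie_exp X xi1, lie_exp X xi2).

Definition Efield : vfield := (xi1, fopp xi2).
Definition Eder (F : fps) : fps := lie Efield F.

(* log(1 + G) / G := sum_{n >= 1} (-1)^(n-1)/n G^(n-1), for G(0) = 0 *)
Definition log1p_div (G : fps) : fps := fun i j =>
  \sum_(n < (i + j).+1) ((-1) ^+ n / (n.+1)%:R) * fpow G n i j.

Definition fdvd (D F : fps) : Prop := exists g : fps, F = fmul D g.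

End FPS.

Definition C := (Rdefinitions.R)[i].

(* a holomorphic germ at 0 is given by a convergent power series *)
Definition convergent (F : fps C) : Prop :=
  exists M r : C, 0 < r /\ forall i j, `|F i j| <= M * r ^+ (i + j).

Definition hfi : fps C := fmul (@xi1 C) (@xi2 C).

(* Formal power series in [xi1, xi2] form an integral domain, and the Lie
   series [exp X] of a vector field with vanishing linear part is a ring
   morphism (Leibniz rule and Cauchy product).  Since [h = xi1 xi2] is a first
   integral of [phi], [exp X] fixes [h], and comparing lowest-degree terms
   gives [X.h = 0], i.e. [X = a E] with [a(0) = 0].  Iterating [a E] on [xi1]
   gives [(a E)^n xi1 = xi1 a ((E.a)^(n-1) + a S_n)], hence [f = a w] with
   [w = (exp (E.a) - 1) / E.a + a T] a unit, and [E.f = u + a V] with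
   [u = exp (E.a) - 1].  As [log (1 + u) = E.a], this gives
   [f log (1 + E.f) / E.f = a + a^2 q], so that
   [X - f log (1 + E.f) / E.f E = - q w^-2 f^2 E].  The error term is thus
   divisible by [f^2 E] itself. *)

From Pilot Require Import Defs.
From HB Require Import structures.
From mathcomp Require Import all_boot all_order all_algebra.
From mathcomp Require Import complex Rstruct.
From mathcomp Require boolp.
From mathcomp Require Import ring zify.
Set Implicit Arguments. Unset Strict Implicit. Unset Printing Implicit Defensive.
Import Order.TTheory GRing.Theory Num.Theory.
Local Open Scope ring_scope.

Lemma sum_triangle (R : nmodType) (G : nat -> nat -> R) n :
  \sum_(a < n.+1) \sum_(c < a.+1) G c (a - c)%N =
  \sum_(c < n.+1) \sum_(d < (n - c).+1) G c d.
Proof.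
elim: n => [|n IH]; first by rewrite !big_ord1 /= ?big_ord1.
rewrite big_ord_recr /= IH [RHS]big_ord_recr /= subnn big_ord1.
rewrite [X in _ = X + _](eq_bigr (fun c : 'I_n.+1 =>
   \sum_(d < (n - c).+1) G c d + G c (n.+1 - c)%N)); last first.
  by move=> c _; rewrite subSn ?big_ord_recr // -ltnS.
rewrite big_split /= -addrA; congr (_ + _).
by rewrite big_ord_recr /= subnn.
Qed.

Lemma sum_triangle3 (R : nmodType) (g : nat -> nat -> nat -> R) n :
  \sum_(a < n.+1) \sum_(c < a.+1) g c (a - c)%N (n - a)%N =
  \sum_(c < n.+1) \sum_(d < (n - c).+1) g c d (n - c - d)%N.
Proof.
rewrite -(sum_triangle (fun c d => g c d (n - c - d)%N)).
apply: eq_bigr => a _; apply: eq_bigr => c _.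
by rewrite -subnDA subnKC // -ltnS.
Qed.

Lemma sum_ord_trunc (R : nmodType) m N (f : nat -> R) : (m <= N)%N ->
  (forall n, (m <= n < N)%N -> f n = 0) ->
  \sum_(n < N) f n = \sum_(n < m) f n.
Proof.
move=> mN f0; rewrite -(subnKC mN) big_split_ord /= [X in _ + X]big1 ?addr0 // => n _.
by apply: f0; have := ltn_ord n; lia.
Qed.

Lemma sum_triangle_box (R : nmodType) N (T : nat -> nat -> R) :
  (forall a c, (N <= a + c)%N -> T a c = 0) ->
  \sum_(s < N) \sum_(a < s.+1) T a (s - a)%N = \sum_(a < N) \sum_(c < N) T a c.
Proof.
case: N => [|n] T0; first by rewrite !big_ord0.
rewrite sum_triangle; apply: eq_bigr => a _.
rewrite [RHS](@sum_ord_trunc _ (n - a).+1) ?ltnS ?leq_subr // => c /andP [ac _].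
by apply: T0; have := ltn_ord a; lia.
Qed.

Section FpsRing.
Variable K : fieldType.
Local Notation fps := (Defs.fps K).

Lemma fps_ext (F G : fps) : (forall i j, F i j = G i j) -> F = G.
Proof. by move=> FG; apply: boolp.funext => i; apply: boolp.funext => j; apply: FG. Qed.

Definition fps0 : fps := fun _ _ => 0.

Lemma faddA : associative (@fadd K).
Proof. by move=> F G H; apply: fps_ext => i j; rewrite /fadd addrA. Qed.
Lemma faddC : commutative (@fadd K).
Proof. by move=> F G; apply: fps_ext => i j; rewrite /fadd addrC. Qed.
Lemma fadd0 : left_id fps0 (@fadd K).
Proof. by move=> F; apply: fps_ext => i j; rewrite /fadd add0r. Qed.
Lemma faddN : left_inverse fps0 (@fopp K) (@fadd K).
Proof. by move=> F; apply: fps_ext => i j; rewrite /fadd /fopp addNr. Qed.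

Lemma fmulC : commutative (@fmul K).
Proof.
move=> F G; apply: fps_ext => i j; rewrite /fmul.
rewrite (reindex_inj rev_ord_inj); apply: eq_bigr => a _.
rewrite (reindex_inj rev_ord_inj); apply: eq_bigr => b _ /=.
by rewrite !subSS !subKn 1?mulrC // -ltnS.
Qed.

Lemma fmulA : associative (@fmul K).
Proof.
move=> F G H; apply: fps_ext => i j; symmetry; rewrite /fmul.
pose g c a' i' := \sum_(b < j.+1) \sum_(d < b.+1)
  F c d * G a' (b - d)%N * H i' (j - b)%N.
transitivity (\sum_(a < i.+1) \sum_(c < a.+1) g c (a - c)%N (i - a)%N).
  apply: eq_bigr => a _; rewrite exchange_big; apply: eq_bigr => b _ /=.
  by rewrite mulr_suml; apply: eq_bigr => c _; rewrite mulr_suml.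
rewrite sum_triangle3; apply: eq_bigr => c _.
transitivity (\sum_(d < j.+1) \sum_(a' < (i - c).+1) \sum_(b' < (j - d).+1)
   F c d * G a' b' * H (i - c - a')%N (j - d - b')%N); last first.
  apply: eq_bigr => d _; rewrite mulr_sumr; apply: eq_bigr => a' _.
  by rewrite mulr_sumr; apply: eq_bigr => b' _; rewrite mulrA.
rewrite [RHS]exchange_big; apply: eq_bigr => a' _.
exact: (sum_triangle3 (fun d b' j' => F c d * G a' b' * H (i - c - a')%N j')).
Qed.

Lemma fmul1 : left_id (@fps1 K) (@fmul K).
Proof.
move=> F; apply: fps_ext => i j.
rewrite /fmul big_ord_recl [X in _ + X]big1 ?addr0; last first.
  by move=> a _; apply: big1 => b _; rewrite /fps1 /fpsC /= mul0r.
rewrite big_ord_recl [X in _ + X]big1 ?addr0 => [|b _]; last by rewrite /fps1 /fpsC /= mul0r.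
by rewrite /fps1 /fpsC /= mul1r !subn0.
Qed.

Lemma fmulDl : left_distributive (@fmul K) (@fadd K).
Proof.
move=> F G H; apply: fps_ext => i j; rewrite /fmul /fadd -big_split /=.
by apply: eq_bigr => a _; rewrite -big_split; apply: eq_bigr => b _; rewrite mulrDl.
Qed.

HB.instance Definition _ := boolp.gen_eqMixin fps.
HB.instance Definition _ := boolp.gen_choiceMixin fps.

Lemma fps1_neq0 : (@fps1 K) != fps0.
Proof.
apply/eqP => /(congr1 (fun F => F 0%N 0%N)).
by rewrite /fps1 /fpsC /fps0 /=; apply/eqP/oner_neq0.
Qed.

HB.instance Definition _ := GRing.isZmodule.Build fps faddA faddC fadd0 faddN.
HB.instance Definition _ :=
  GRing.Zmodule_isComNzRing.Build fps fmulA fmulC fmul1 fmulDl fps1_neq0.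

End FpsRing.

Section Coefficients.
Variable K : fieldType.
Local Notation fps := (Defs.fps K).
Local Notation x1 := (xi1 K).
Local Notation x2 := (xi2 K).

Lemma fcoefD (F G : fps) i j : (F + G) i j = F i j + G i j. Proof. by []. Qed.
Lemma fcoefN (F : fps) i j : (- F) i j = - F i j. Proof. by []. Qed.
Lemma fcoefB (F G : fps) i j : (F - G) i j = F i j - G i j. Proof. by []. Qed.
Lemma fcoef0 i j : (0 : fps) i j = 0. Proof. by []. Qed.
Lemma fcoef1 i j : (1 : fps) i j = if (i == 0%N) && (j == 0%N) then 1 else 0.
Proof. by []. Qed.
Lemma fcoefC c i j : (fpsC c : fps) i j = if (i == 0%N) && (j == 0%N) then c else 0.
Proof. by []. Qed.
Lemma fcoefM (F G : fps) i j : (F * G) i j =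
  \sum_(a < i.+1) \sum_(b < j.+1) F a b * G (i - a)%N (j - b)%N.
Proof. by []. Qed.
Lemma fcoef_sum I (r : seq I) (P : pred I) (F : I -> fps) i j :
  (\sum_(k <- r | P k) F k) i j = \sum_(k <- r | P k) F k i j.
Proof. by elim/big_rec2: _ => // k a b _ <-. Qed.
Lemma fcoefMn (F : fps) m i j : (F *+ m) i j = F i j *+ m.
Proof. by elim: m => [|m IH]; rewrite ?mulr0n // !mulrS fcoefD IH. Qed.

Lemma fcoefCM c (F : fps) i j : (fpsC c * F) i j = c * F i j.
Proof.
rewrite fcoefM big_ord_recl [X in _ + X]big1 ?addr0; last first.
  by move=> a _; apply: big1 => b _; rewrite fcoefC /= mul0r.
rewrite big_ord_recl [X in _ + X]big1 ?addr0 => [|b _]; last by rewrite fcoefC /= mul0r.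
by rewrite fcoefC /= !subn0.
Qed.

Lemma fpsCM c d : fpsC (c * d) = fpsC c * fpsC d :> fps.
Proof.
by apply: fps_ext => i j; rewrite fcoefCM !fcoefC; case: (_ && _); rewrite ?mulr0.
Qed.
Lemma fpsCN c : fpsC (- c) = - fpsC c :> fps.
Proof. by apply: fps_ext => i j; rewrite fcoefN !fcoefC; case: (_ && _); rewrite ?oppr0. Qed.
Lemma fpsC0 : fpsC 0 = 0 :> fps.
Proof. by apply: fps_ext => i j; rewrite fcoefC; case: (_ && _). Qed.
Lemma fpsC1 : fpsC 1 = 1 :> fps.
Proof. by []. Qed.
Lemma fpsCX c m : fpsC (c ^+ m) = fpsC c ^+ m :> fps.
Proof. by elim: m => [|m IH]; rewrite ?expr0 ?fpsC1 // !exprS fpsCM IH. Qed.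
Lemma mulrn_fpsC (F : fps) m : F *+ m = fpsC (m%:R) * F.
Proof. by apply: fps_ext => i j; rewrite fcoefMn fcoefCM mulr_natl. Qed.

Lemma fpowE (F : fps) n : fpow F n = F ^+ n.
Proof. by elim: n => // n IH; rewrite exprS -IH. Qed.

Lemma fcoef_xi1M (F : fps) i j : (x1 * F) i j = if i is i'.+1 then F i' j else 0.
Proof.
rewrite fcoefM; case: i => [|i].
  by rewrite big_ord1 big1 // => b _; rewrite /xi1 /= mul0r.
rewrite big_ord_recl big1 ?add0r => [|b _]; last by rewrite /xi1 /= mul0r.
rewrite big_ord_recl [X in _ + X]big1 ?addr0; last first.
  by move=> a _; apply: big1 => b _; rewrite /xi1 /= mul0r.
rewrite big_ord_recl [X in _ + X]big1 ?addr0 => [|b _]; last by rewrite /xi1 /= mul0r.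
by rewrite /xi1 /= mul1r !subn0 subn1.
Qed.

Lemma fcoef_xi2M (F : fps) i j : (x2 * F) i j = if j is j'.+1 then F i j' else 0.
Proof.
rewrite fcoefM big_ord_recl [X in _ + X]big1 ?addr0; last first.
  by move=> a _; apply: big1 => b _; rewrite /xi2 /= mul0r.
case: j => [|j]; first by rewrite big_ord1 /xi2 /= mul0r.
rewrite big_ord_recl /xi2 /= mul0r add0r.
rewrite big_ord_recl [X in _ + X]big1 ?addr0 => [|b _]; last by rewrite /= mul0r.
by rewrite /= mul1r !subn0 subn1.
Qed.

Lemma xi1_mulI (F G : fps) : x1 * F = x1 * G -> F = G.
Proof.
move=> E; apply: fps_ext => i j.
by move: (congr1 (fun H => H i.+1 j) E); rewrite !fcoef_xi1M.
Qed.

Lemma fcoefM_congr (U U' V V' : fps) i j :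
  (forall x y, (x <= i)%N -> (y <= j)%N -> U x y = U' x y) ->
  (forall x y, (x <= i)%N -> (y <= j)%N -> V x y = V' x y) ->
  (U * V) i j = (U' * V') i j.
Proof.
move=> UU' VV'; rewrite !fcoefM; apply: eq_bigr => a _; apply: eq_bigr => b _.
have ai : (a <= i)%N by rewrite -ltnS.
have bj : (b <= j)%N by rewrite -ltnS.
by rewrite UU' // VV' // ?leq_subr.
Qed.

End Coefficients.

Section Order.
Variable K : fieldType.
Local Notation fps := (Defs.fps K).
Local Notation x1 := (xi1 K).
Local Notation x2 := (xi2 K).

Definition ordge (F : fps) k := forall i j, (i + j < k)%N -> F i j = 0.

Lemma ordge0 (F : fps) : ordge F 0.
Proof. by []. Qed.
Lemma ordgeW (F : fps) k l : (l <= k)%N -> ordge F k -> ordge F l.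
Proof. by move=> lk F0 i j ij; apply: F0; apply: leq_trans lk. Qed.
Lemma ordgeD (F G : fps) k : ordge F k -> ordge G k -> ordge (F + G) k.
Proof. by move=> F0 G0 i j ij; rewrite fcoefD F0 ?G0 ?addr0. Qed.
Lemma ordgeN (F : fps) k : ordge F k -> ordge (- F) k.
Proof. by move=> F0 i j ij; rewrite fcoefN F0 ?oppr0. Qed.
Lemma ordgeB (F G : fps) k : ordge F k -> ordge G k -> ordge (F - G) k.
Proof. by move=> F0 G0; apply: ordgeD => //; apply: ordgeN. Qed.

Lemma ordgeM (F G : fps) k l : ordge F k -> ordge G l -> ordge (F * G) (k + l).
Proof.
move=> F0 G0 i j ij; rewrite fcoefM; apply: big1 => a _; apply: big1 => b _.
have [ab|ab] := ltnP (a + b) k; first by rewrite F0 ?mul0r.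
rewrite G0 ?mulr0 //; have := ltn_ord a; have := ltn_ord b; lia.
Qed.

Lemma ordgeMl (F G : fps) k : ordge G k -> ordge (F * G) k.
Proof. by rewrite -{2}[k]add0n; apply: ordgeM. Qed.

Lemma ordgeMr (F G : fps) k : ordge F k -> ordge (F * G) k.
Proof. by rewrite mulrC; apply: ordgeMl. Qed.

Lemma ordgeX (F : fps) n : ordge F 1 -> ordge (F ^+ n) n.
Proof.
move=> F0; elim: n => [|n IH]; first exact: ordge0.
by rewrite exprS -add1n; apply: ordgeM.
Qed.

Lemma ordge_xi1 : ordge x1 1.
Proof. by move=> [|i] [|j]. Qed.
Lemma ordge_xi2 : ordge x2 1.
Proof. by move=> [|i] [|j]. Qed.

Lemma ordge1 (F : fps) : F 0%N 0%N = 0 -> ordge F 1.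
Proof. by move=> F0 [|i] [|j]. Qed.

End Order.

Section PartialDerivatives.
Variable K : fieldType.
Local Notation fps := (Defs.fps K).
Local Notation x1 := (xi1 K).
Local Notation x2 := (xi2 K).

Lemma d1D (F G : fps) : d1 (F + G) = d1 F + d1 G.
Proof. by apply: fps_ext => i j; rewrite /d1 fcoefD mulrnDl. Qed.
Lemma d1C c : d1 (fpsC c) = 0 :> fps.
Proof. by apply: fps_ext => i j; rewrite /d1 fcoefC /= mul0rn. Qed.
Lemma d1_xi1 : d1 x1 = 1.
Proof. by apply: fps_ext => [[|i]] [|j]; rewrite /d1 /xi1 /= ?mul0rn. Qed.
Lemma d1_xi2 : d1 x2 = 0.
Proof. by apply: fps_ext => i j; rewrite /d1 /xi2 /= mul0rn. Qed.

Lemma d1M (F G : fps) : d1 (F * G) = d1 F * G + F * d1 G.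
Proof.
apply: fps_ext => i j; rewrite fcoefD /d1 fcoefM -sumrMnl.
pose t a b := F a b * G (i.+1 - a)%N (j - b)%N.
transitivity (\sum_(a < i.+2) \sum_(b < j.+1) (t a b *+ a + t a b *+ (i.+1 - a))).
  apply: eq_bigr => a _; rewrite -sumrMnl; apply: eq_bigr => b _.
  by rewrite -mulrnDr subnKC // -ltnS.
under eq_bigr => a _ do rewrite big_split.
rewrite big_split /=; congr (_ + _).
  rewrite big_ord_recl /= big1 ?add0r => [|b _]; last by rewrite mulr0n.
  rewrite fcoefM; apply: eq_bigr => a _; apply: eq_bigr => b _.
  by rewrite /t /bump /= add1n subSS mulrnAl.
rewrite big_ord_recr /= [X in _ + X]big1 ?addr0 => [|b _]; last by rewrite subnn mulr0n.
rewrite fcoefM; apply: eq_bigr => a _; apply: eq_bigr => b _.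
by rewrite /t subSn ?mulrnAr // -ltnS.
Qed.

Definition swap (F : fps) : fps := fun i j => F j i.

Lemma swapD (F G : fps) : swap (F + G) = swap F + swap G. Proof. by []. Qed.
Lemma swapM (F G : fps) : swap (F * G) = swap F * swap G.
Proof. by apply: fps_ext => i j; rewrite /swap !fcoefM exchange_big. Qed.
Lemma swap1 : swap 1 = 1.
Proof. by apply: fps_ext => i j; rewrite /swap !fcoef1 andbC. Qed.
Lemma swap_xi1 : swap x1 = x2.
Proof. by apply: fps_ext => i j; rewrite /swap /xi1 /xi2 andbC. Qed.
Lemma swap_xi2 : swap x2 = x1.
Proof. by apply: fps_ext => i j; rewrite /swap /xi1 /xi2 andbC. Qed.
Lemma d2_swap (F : fps) : d2 F = swap (d1 (swap F)). Proof. by []. Qed.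

Lemma d2D (F G : fps) : d2 (F + G) = d2 F + d2 G.
Proof. by rewrite !d2_swap swapD d1D swapD. Qed.
Lemma d2M (F G : fps) : d2 (F * G) = d2 F * G + F * d2 G.
Proof. by rewrite !d2_swap swapM d1M swapD !swapM. Qed.
Lemma d2C c : d2 (fpsC c) = 0 :> fps.
Proof. by apply: fps_ext => i j; rewrite /d2 fcoefC andbF /= mul0rn. Qed.
Lemma d2_xi1 : d2 x1 = 0.
Proof. by rewrite d2_swap swap_xi1 d1_xi2. Qed.
Lemma d2_xi2 : d2 x2 = 1.
Proof. by rewrite d2_swap swap_xi2 d1_xi1 swap1. Qed.

Lemma ordge_d1 (F : fps) k : ordge F k.+1 -> ordge (d1 F) k.
Proof. by move=> F0 i j ij; rewrite /d1 F0 ?mul0rn. Qed.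
Lemma ordge_d2 (F : fps) k : ordge F k.+1 -> ordge (d2 F) k.
Proof. by move=> F0 i j ij; rewrite /d2 F0 ?mul0rn // addnS. Qed.

End PartialDerivatives.

Section Summation.
Variable K : fieldType.
Local Notation fps := (Defs.fps K).

(* The lag [c] lets the degree-lowering [d1] and [d2] commute with sums. *)
Definition sums (F : nat -> fps) (S : fps) :=
  exists c, forall i j N, (i + j + c < N)%N -> S i j = \sum_(n < N) F n i j.
Definition summable (F : nat -> fps) := forall n, ordge (F n) n.
Definition fsum (F : nat -> fps) : fps := fun i j => \sum_(n < (i + j).+1) F n i j.

Lemma sums_fsum F : summable F -> sums F (fsum F).
Proof.
move=> F_ord; exists 0%N => i j N; rewrite addn0 => ijN.
rewrite /fsum (@sum_ord_trunc _ (i + j).+1 N (fun n => F n i j)) //.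
by move=> n /andP [ijn _]; apply: F_ord.
Qed.

Lemma sums_unique F S T : sums F S -> sums F T -> S = T.
Proof.
move=> [c1 FS] [c2 FT]; apply: fps_ext => i j.
by rewrite (FS i j (i + j + c1 + c2).+1) ?(FT i j (i + j + c1 + c2).+1) //; lia.
Qed.

Lemma sums_fsumE F S : summable F -> sums F S -> S = fsum F.
Proof. by move=> F_ord FS; apply: (sums_unique FS); apply: sums_fsum. Qed.

Lemma sums_ext F G S : (forall n, F n = G n) -> sums F S -> sums G S.
Proof. by move=> /boolp.funext ->. Qed.

Lemma sumsD F G S T : sums F S -> sums G T -> sums (fun n => F n + G n) (S + T).
Proof.
move=> [c1 FS] [c2 GT]; exists (c1 + c2)%N => i j N ijN.
by rewrite fcoefD (FS i j N) ?(GT i j N) -?big_split //; lia.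
Qed.

Lemma sumsMl G F S : sums F S -> sums (fun n => G * F n) (G * S).
Proof.
move=> [c FS]; exists c => i j N ijN; rewrite fcoefM.
transitivity (\sum_(a < i.+1) \sum_(b < j.+1) \sum_(n < N)
                G a b * F n (i - a)%N (j - b)%N).
  apply: eq_bigr => a _; apply: eq_bigr => b _.
  rewrite (FS _ _ N) ?mulr_sumr //.
  by have := ltn_ord a; have := ltn_ord b; lia.
under eq_bigr => a _ do rewrite exchange_big.
by rewrite exchange_big; apply: eq_bigr => n _; rewrite fcoefM.
Qed.

Lemma sumsMr G F S : sums F S -> sums (fun n => F n * G) (S * G).
Proof. by rewrite mulrC => /(sumsMl G); apply: sums_ext => n; rewrite mulrC. Qed.

Lemma sums_shift F S : sums (fun n => F n.+1) S -> sums F (F 0%N + S).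
Proof.
move=> [c FS]; exists c.+1 => i j [|N] ijN; first by lia.
by rewrite big_ord_recl fcoefD (FS i j N) //; lia.
Qed.

Lemma sums_shift0 F S : F 0%N = 0 -> sums (fun n => F n.+1) S -> sums F S.
Proof. by move=> F0 /sums_shift; rewrite F0 add0r. Qed.

Lemma sums_unshift F S : sums F S -> sums (fun n => F n.+1) (S - F 0%N).
Proof.
move=> [c FS]; exists c => i j N ijN.
by rewrite fcoefB (FS i j N.+1) 1?big_ord_recl 1?addrC ?addKr //; lia.
Qed.

Lemma sums_d1 F S : sums F S -> sums (fun n => d1 (F n)) (d1 S).
Proof.
move=> [c FS]; exists c.+1 => i j N ijN.
by rewrite /d1 (FS i.+1 j N) -?sumrMnl //; lia.
Qed.

Lemma sums_swap F S : sums F S -> sums (fun n => swap (F n)) (swap S).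
Proof. by move=> [c FS]; exists c => i j N ijN; rewrite /swap (FS j i N) //; lia. Qed.

Lemma sums_d2 F S : sums F S -> sums (fun n => d2 (F n)) (d2 S).
Proof. by move=> FS; exact: (sums_swap (sums_d1 (sums_swap FS))). Qed.

Lemma summable_scale (c : nat -> K) F :
  summable F -> summable (fun n => fpsC (c n) * F n).
Proof. by move=> F_ord n; apply: ordgeMl. Qed.

Lemma summable_pow (r : fps) : ordge r 1 -> summable (fun n => r ^+ n).
Proof. by move=> r0 n; apply: ordgeX. Qed.

Lemma sums_telescope_pow (r : fps) : ordge r 1 -> sums (fun n => r ^+ n - r ^+ n.+1) 1.
Proof.
move=> r0; exists 0%N => i j N; rewrite addn0 => ijN.
rewrite -(fcoef_sum (index_enum _) xpredT (fun n : 'I_N => r ^+ n - r ^+ n.+1)).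
have -> : \sum_(n < N) (r ^+ n - r ^+ n.+1) = 1 - r ^+ N.
  elim: N {ijN} => [|N IH]; first by rewrite big_ord0 expr0 subrr.
  by rewrite big_ord_recr /= IH addrA subrK.
by rewrite fcoefB (@ordgeX _ r N r0 i j) ?subr0.
Qed.

Lemma fps_invertible (w : fps) : w 0%N 0%N = 1 -> exists v, w * v = 1.
Proof.
move=> w0; have r0 : ordge (1 - w) 1 by apply: ordge1; rewrite fcoefB w0 subrr.
exists (fsum (fun n => (1 - w) ^+ n)).
apply: (sums_unique (sumsMl w (sums_fsum (summable_pow r0)))).
by apply: sums_ext (sums_telescope_pow r0) => n; rewrite exprS; ring.
Qed.

Lemma fcoef_fsumM (A B : nat -> fps) i j : summable A -> summable B ->
  (fsum A * fsum B) i j =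
  \sum_(k < (i + j).+1) \sum_(l < (i + j).+1) (A k * B l) i j.
Proof.
move=> A_ord B_ord; rewrite fcoefM.
transitivity (\sum_(a < i.+1) \sum_(b < j.+1) \sum_(k < (i + j).+1)
    \sum_(l < (i + j).+1) A k a b * B l (i - a)%N (j - b)%N).
  apply: eq_bigr => a _; apply: eq_bigr => b _.
  have ai := ltn_ord a; have bj := ltn_ord b.
  rewrite /fsum -(@sum_ord_trunc _ (a + b).+1 (i + j).+1 (fun k => A k a b));
    last 2 first; [by lia | by move=> n /andP [abn _]; apply: A_ord |].
  rewrite -(@sum_ord_trunc _ (i - a + (j - b)).+1 (i + j).+1
              (fun l => B l (i - a)%N (j - b)%N)); last 2 first.
  - by lia.
  - by move=> n /andP [abn _]; apply: B_ord.
  by rewrite mulr_suml; apply: eq_bigr => k _; rewrite mulr_sumr.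
under eq_bigr => a _ do rewrite exchange_big.
rewrite exchange_big; apply: eq_bigr => k _.
under eq_bigr => a _ do rewrite exchange_big.
by rewrite exchange_big; apply: eq_bigr => l _; rewrite fcoefM.
Qed.

Lemma sums_cauchy (A B : nat -> fps) : summable A -> summable B ->
  sums (fun n => \sum_(k < n.+1) A k * B (n - k)%N) (fsum A * fsum B).
Proof.
move=> A_ord B_ord; exists 0%N => i j N; rewrite addn0 => ijN.
have AB_ord k l : ordge (A k * B l) (k + l) by apply: ordgeM.
rewrite fcoef_fsumM //.
rewrite (@sum_ord_trunc _ (i + j).+1 N
  (fun n => (\sum_(k < n.+1) A k * B (n - k)%N) i j)) //; last first.
  move=> n /andP [ijn _]; rewrite fcoef_sum; apply: big1 => k _.
  by apply: AB_ord; rewrite subnKC // -ltnS.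
under [RHS]eq_bigr => n _ do rewrite fcoef_sum.
rewrite (sum_triangle (fun k l => (A k * B l) i j)); apply: eq_bigr => k _.
rewrite (@sum_ord_trunc _ (i + j - k).+1 (i + j).+1 (fun l => (A k * B l) i j))
  ?ltnS ?leq_subr // => l /andP [kl _].
by apply: AB_ord; have := ltn_ord k; lia.
Qed.

End Summation.

Section Derivations.
Variable K : fieldType.
Local Notation fps := (Defs.fps K).
Local Notation x1 := (xi1 K).
Local Notation x2 := (xi2 K).

Record derivation (D : fps -> fps) : Prop := Derivation {
  derD : forall F G, D (F + G) = D F + D G;
  derM : forall F G, D (F * G) = D F * G + F * D G;
  derC : forall c, D (fpsC c) = 0;
  derS : forall F S, sums F S -> sums (fun n => D (F n)) (D S) }.

Section DerivationTheory.
Variable D : fps -> fps.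
Hypothesis D_der : derivation D.

Lemma der0 : D 0 = 0.
Proof. by rewrite -{1}fpsC0 (derC D_der). Qed.
Lemma der1 : D 1 = 0.
Proof. by rewrite -fpsC1 (derC D_der). Qed.
Lemma derN F : D (- F) = - D F.
Proof. by apply: (@addrI _ (D F)); rewrite -(derD D_der) !subrr der0. Qed.
Lemma derB F G : D (F - G) = D F - D G.
Proof. by rewrite (derD D_der) derN. Qed.
Lemma derCM c F : D (fpsC c * F) = fpsC c * D F.
Proof. by rewrite (derM D_der) (derC D_der) mul0r add0r. Qed.
Lemma derX F n : D (F ^+ n.+1) = (F ^+ n * D F) *+ n.+1.
Proof.
elim: n => [|n IH]; first by rewrite expr1 expr0 mul1r.
by rewrite exprS (derM D_der) IH exprS; ring.
Qed.
Lemma der_sum I (r : seq I) (P : pred I) (F : I -> fps) :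
  D (\sum_(i <- r | P i) F i) = \sum_(i <- r | P i) D (F i).
Proof. exact: (big_morph D (derD D_der) der0). Qed.
Lemma derMn F m : D (F *+ m) = D F *+ m.
Proof. by elim: m => [|m IH]; rewrite ?mulr0n ?der0 // !mulrS (derD D_der) IH. Qed.

End DerivationTheory.

Lemma d1_derivation : derivation (@d1 K).
Proof. by split; [exact: d1D | exact: d1M | exact: d1C | exact: sums_d1]. Qed.
Lemma d2_derivation : derivation (@d2 K).
Proof. by split; [exact: d2D | exact: d2M | exact: d2C | exact: sums_d2]. Qed.

Lemma lieE (X : vfield K) (F : fps) : lie X F = X.1 * d1 F + X.2 * d2 F.
Proof. by []. Qed.
Lemma EderE (F : fps) : Eder F = x1 * d1 F - x2 * d2 F.
Proof. by rewrite -mulNr. Qed.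

Lemma lie_derivation (X : vfield K) : derivation (lie X).
Proof.
split=> [F G|F G|c|F S FS]; rewrite !lieE.
- by rewrite d1D d2D; ring.
- by rewrite d1M d2M; ring.
- by rewrite d1C d2C; ring.
- exact: sumsD (sumsMl X.1 (sums_d1 FS)) (sumsMl X.2 (sums_d2 FS)).
Qed.

Lemma Eder_derivation : derivation (@Eder K).
Proof. exact: lie_derivation. Qed.

Lemma Eder_xi1 : Eder x1 = x1.
Proof. by rewrite EderE d1_xi1 d2_xi1; ring. Qed.

Lemma ordge_Eder (F : fps) k : ordge F k -> ordge (Eder F) k.
Proof.
case: k => [|k] F0; first exact: ordge0.
rewrite EderE -add1n; apply: ordgeB; apply: ordgeM.
- exact: ordge_xi1.
- exact: ordge_d1.
- exact: ordge_xi2.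
- exact: ordge_d2.
Qed.

Lemma vanishing_linear_part_ordge (X : vfield K) :
  vanishing_linear_part X -> ordge X.1 2 /\ ordge X.2 2.
Proof.
case=> [[X10 X20] X11 X12 X21 X22].
by split=> [] [|[|i]] [|[|j]].
Qed.

Lemma ordge_lie (X : vfield K) (F : fps) k : vanishing_linear_part X ->
  ordge F k -> ordge (lie X F) k.+1.
Proof.
move=> /vanishing_linear_part_ordge [X1 X2] F0; rewrite lieE.
case: k F0 => [|k] F0.
  by apply: ordgeD; apply: ordgeMr; apply: (@ordgeW _ _ 2).
by apply: ordgeD; rewrite -add2n; apply: ordgeM => //; [apply: ordge_d1 | apply: ordge_d2].
Qed.

Lemma ordge_iter_lie (X : vfield K) (F : fps) k m : vanishing_linear_part X ->
  ordge F k -> ordge (iter m (lie X) F) (k + m).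
Proof.
move=> X0 F0; elim: m => [|m IH]; first by rewrite addn0.
by rewrite addnS; apply: ordge_lie.
Qed.

End Derivations.

Section LieSeries.
Variable K : numFieldType.
Local Notation fps := (Defs.fps K).
Local Notation x1 := (xi1 K).
Local Notation x2 := (xi2 K).

Lemma iter_lieM (X : vfield K) n (F G : fps) :
  iter n (lie X) (F * G) =
  \sum_(k < n.+1) (iter k (lie X) F * iter (n - k) (lie X) G) *+ 'C(n, k).
Proof.
have X_der := lie_derivation X.
elim: n => [|n IH]; first by rewrite big_ord1 /= mulr1n.
rewrite iterS IH (der_sum X_der).
under eq_bigr => k _ do rewrite (derMn X_der) (derM X_der) mulrnDl.
rewrite big_split /= [RHS]big_ord_recl /= bin0 mulr1n.
under [in RHS]eq_bigr => k _ do rewrite /bump /= add1n add0n binS mulrnDr.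
rewrite big_split /= [RHS]addrA [RHS]addrC; congr (_ + _).
rewrite big_ord_recl /= bin0 mulr1n subn0; congr (_ + _).
rewrite [RHS]big_ord_recr /= bin_small // mulr0n addr0.
apply: eq_bigr => i _; rewrite /bump /= add1n add0n subSS.
by rewrite -(subnSK (ltn_ord i)).
Qed.

Definition lie_term (X : vfield K) (F : fps) n : fps :=
  fpsC ((n`!%:R)^-1) * iter n (lie X) F.

Lemma lie_expE (X : vfield K) F : lie_exp X F = fsum (lie_term X F).
Proof. by apply: fps_ext => i j; apply: eq_bigr => n _; rewrite /lie_term fcoefCM. Qed.

Lemma summable_lie_term (X : vfield K) F :
  vanishing_linear_part X -> summable (lie_term X F).
Proof. by move=> X0 n; apply: ordgeMl; rewrite -[n]add0n; apply: ordge_iter_lie. Qed.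

Lemma invfact_bin n k : (k <= n)%N ->
  (n`!%:R : K)^-1 * 'C(n, k)%:R = (k`!%:R)^-1 * ((n - k)`!%:R)^-1.
Proof.
move=> kn; have fact_neq0 m : (m`!%:R : K) != 0 by rewrite pnatr_eq0 -lt0n fact_gt0.
have bin_neq0 : ('C(n, k)%:R : K) != 0 by rewrite pnatr_eq0 -lt0n bin_gt0.
by rewrite -(bin_fact kn) !natrM; field; rewrite bin_neq0 !fact_neq0.
Qed.

Lemma lie_termM (X : vfield K) F G n :
  lie_term X (F * G) n = \sum_(k < n.+1) lie_term X F k * lie_term X G (n - k)%N.
Proof.
rewrite /lie_term iter_lieM mulr_sumr; apply: eq_bigr => k _.
have kn : (k <= n)%N by rewrite -ltnS.
by rewrite mulrn_fpsC mulrA -fpsCM invfact_bin // fpsCM; ring.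
Qed.

Lemma lie_expM (X : vfield K) F G : vanishing_linear_part X ->
  lie_exp X (F * G) = lie_exp X F * lie_exp X G.
Proof.
move=> X0; rewrite !lie_expE.
apply: (sums_unique (sums_fsum (summable_lie_term (F * G) X0))).
apply: sums_ext (sums_cauchy (summable_lie_term F X0) (summable_lie_term G X0)).
by move=> n; rewrite lie_termM.
Qed.

(* Induction on the degree: only the terms [n = 0, 1] of the Lie series reach
   the lowest degree of [lie X F]. *)
Lemma lie_exp_fixed (X : vfield K) (F : fps) :
  vanishing_linear_part X -> lie_exp X F = F -> lie X F = 0.
Proof.
move=> X0 XF.
suff ord_lie d : ordge (lie X F) d.+1.
  by apply: fps_ext => i j; apply: (ord_lie (i + j)%N).
elim: d => [|d IH]; first exact: ordge_lie X0 (ordge0 F).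
move=> i j; rewrite ltnS leq_eqVlt => /orP [/eqP ijd|]; last exact: IH.
have := congr1 (fun G => G i j) XF; rewrite /lie_exp ijd.
rewrite big_ord_recl big_ord_recl big1 => [|n _]; last first.
  rewrite /bump /= add0n -2!iterS iterSr.
  by rewrite (@ordge_iter_lie _ X _ _ n.+1 X0 IH i j) ?mulr0 // ijd; lia.
rewrite addr0 /= (_ : 0`! = 1)%N // (_ : (bump 0 0)`! = 1)%N // invr1 !mul1r.
by move/(canRL (addKr _)); rewrite addNr.
Qed.

Definition Emul (a : fps) : vfield K := (x1 * a, - (x2 * a)).

Lemma lie_xi1xi2_eq0 (X : vfield K) :
  vanishing_linear_part X -> lie X (x1 * x2) = 0 ->
  exists2 a : fps, ordge a 1 & X = Emul a.
Proof.
case: X => [X1 X2] X0 Xh.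
have X12 i j : (x2 * X1) i j + (x1 * X2) i j = 0.
  rewrite -fcoefD (_ : _ + _ = lie (X1, X2) (x1 * x2)); first by rewrite Xh.
  by rewrite lieE d1M d2M d1_xi1 d1_xi2 d2_xi1 d2_xi2 /=; ring.
exists (fun i j => X1 i.+1 j); first by apply: ordge1; case: X0.
rewrite /Emul; congr pair; apply: fps_ext => i j.
  rewrite fcoef_xi1M; case: i => [|i] //.
  by have := X12 0%N j.+1; rewrite fcoef_xi2M fcoef_xi1M addr0.
rewrite fcoefN fcoef_xi2M; case: j => [|j].
  by have := X12 i.+1 0%N; rewrite fcoef_xi2M fcoef_xi1M add0r /= => ->; rewrite oppr0.
have := X12 i.+1 j.+1; rewrite fcoef_xi2M fcoef_xi1M /= => /eqP.
by rewrite addr_eq0 => /eqP ->; rewrite opprK.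
Qed.

End LieSeries.

Section Composition.
Variable K : fieldType.
Local Notation fps := (Defs.fps K).
Local Notation x1 := (xi1 K).
Local Notation x2 := (xi2 K).

Definition fcomp_trunc N (F P Q : fps) : fps :=
  \sum_(a < N) \sum_(b < N) fpsC (F a b) * (P ^+ a * Q ^+ b).

Lemma ordge_powM (P Q : fps) a b :
  ordge P 1 -> ordge Q 1 -> ordge (P ^+ a * Q ^+ b) (a + b).
Proof. by move=> P0 Q0; apply: ordgeM; apply: ordgeX. Qed.

Lemma fcomp_truncE (F P Q : fps) N i j : ordge P 1 -> ordge Q 1 ->
  (i + j < N)%N -> fcomp F P Q i j = fcomp_trunc N F P Q i j.
Proof.
move=> P0 Q0 ijN; have PQ0 a b := @ordge_powM P Q a b P0 Q0.
rewrite /fcomp /fcomp_trunc fcoef_sum.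
rewrite [RHS](@sum_ord_trunc _ (i + j).+1 _
  (fun a => (\sum_(b < N) fpsC (F a b) * (P ^+ a * Q ^+ b)) i j)) //; last first.
  move=> a /andP [ija _].
  by rewrite fcoef_sum big1 // => b _; rewrite fcoefCM PQ0 ?mulr0 //; lia.
apply: eq_bigr => a _; rewrite fcoef_sum.
rewrite [RHS](@sum_ord_trunc _ (i + j).+1 _
  (fun b => (fpsC (F a b) * (P ^+ a * Q ^+ b)) i j)) //; last first.
  by move=> b /andP [ijb _]; rewrite fcoefCM PQ0 ?mulr0 //; lia.
by apply: eq_bigr => b _; rewrite fcoefCM !fpowE.
Qed.

Lemma fcompM (F G P Q : fps) : ordge P 1 -> ordge Q 1 ->
  fcomp (F * G) P Q = fcomp F P Q * fcomp G P Q.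
Proof.
move=> P0 Q0; apply: fps_ext => i j; set N := (i + j).+1.
pose W a b := (P ^+ a * Q ^+ b) i j.
have W0 a b : (N <= a + b)%N -> W a b = 0.
  by move=> ab; apply: (@ordge_powM P Q a b P0 Q0); lia.
rewrite (@fcomp_truncE (F * G) P Q N) // (@fcoefM_congr _ _ (fcomp_trunc N F P Q) _
  (fcomp_trunc N G P Q)) => [|x y xi yj|x y xi yj]; last 2 first.
- by apply: fcomp_truncE => //; lia.
- by apply: fcomp_truncE => //; lia.
transitivity (\sum_(a < N) \sum_(c < N) \sum_(b < N) \sum_(d < N)
                F a b * G c d * W (a + c)%N (b + d)%N).
  rewrite /fcomp_trunc fcoef_sum -(sum_triangle_box (T := fun a c =>
    \sum_(b < N) \sum_(d < N) F a b * G c d * W (a + c)%N (b + d)%N)); last first.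
    move=> a c ac; apply: big1 => b _; apply: big1 => d _.
    by rewrite W0 ?mulr0 //; lia.
  apply: eq_bigr => s _; rewrite fcoef_sum.
  under eq_bigr => t _ do rewrite fcoefCM fcoefM mulr_suml.
  rewrite exchange_big; apply: eq_bigr => a _.
  rewrite -(sum_triangle_box (T := fun b d =>
    F a b * G (s - a)%N d * W (a + (s - a))%N (b + d)%N)); last first.
    by move=> b d bd; rewrite W0 ?mulr0 //; lia.
  apply: eq_bigr => t _; rewrite mulr_suml; apply: eq_bigr => b _.
  by rewrite /W !subnKC // -ltnS.
have -> : fcomp_trunc N F P Q * fcomp_trunc N G P Q =
    \sum_(a < N) \sum_(c < N) \sum_(b < N) \sum_(d < N)
      fpsC (F a b * G c d) * (P ^+ (a + c) * Q ^+ (b + d)).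
  rewrite /fcomp_trunc big_distrl; apply: eq_bigr => a _.
  rewrite big_distrl [RHS]exchange_big; apply: eq_bigr => b _.
  rewrite big_distrr; apply: eq_bigr => c _; rewrite big_distrr.
  by apply: eq_bigr => d _; rewrite /= fpsCM !exprD; ring.
rewrite fcoef_sum; apply: eq_bigr => a _; rewrite fcoef_sum; apply: eq_bigr => c _.
rewrite fcoef_sum; apply: eq_bigr => b _; rewrite fcoef_sum; apply: eq_bigr => d _.
by rewrite fcoefCM.
Qed.

Lemma fcomp_xi1xi2 (P Q : fps) : ordge P 1 -> ordge Q 1 -> fcomp (x1 * x2) P Q = P * Q.
Proof.
move=> P0 Q0; apply: fps_ext => i j.
rewrite (@fcomp_truncE _ P Q (i + j).+2) // /fcomp_trunc fcoef_sum.
under eq_bigr => a _ do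
  (rewrite fcoef_sum; under eq_bigr => b _ do rewrite fcoefCM fcoef_xi1M).
rewrite 2!big_ord_recl /= [X in X + _]big1 => [|b _]; last by rewrite mul0r.
rewrite [X in _ + (_ + X)]big1 => [|a _]; last first.
  by apply: big1 => b _; rewrite /xi2 /= mul0r.
rewrite 2!big_ord_recl /= big1 => [|b _]; last by rewrite /xi2 /= mul0r.
by rewrite /xi2 /= mul0r mul1r !expr1 !add0r !addr0.
Qed.

Lemma ordge_fcomp (F P Q : fps) : F 0%N 0%N = 0 -> ordge (fcomp F P Q) 1.
Proof. by move=> F0; apply: ordge1; rewrite /fcomp !big_ord1 F0 mul0r. Qed.

Lemma miter_first_integral (phi : fmap K) p :
  phi.1 0%N 0%N = 0 -> phi.2 0%N 0%N = 0 ->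
  fcomp (x1 * x2) phi.1 phi.2 = x1 * x2 ->
  [/\ (miter p phi).1 * (miter p phi).2 = x1 * x2,
      ordge (miter p phi).1 1 & ordge (miter p phi).2 1].
Proof.
move=> phi10 phi20 phi_h.
have phiM : phi.1 * phi.2 = x1 * x2 by rewrite -[LHS]fcomp_xi1xi2 //; apply: ordge1.
elim: p => [|p [IH1 IH2 IH3]]; first by split; [| exact: ordge_xi1 | exact: ordge_xi2].
rewrite /miter iterS -/(miter p phi) /mcomp /=.
split; [| exact: ordge_fcomp | exact: ordge_fcomp].
by rewrite -fcompM // phiM fcomp_xi1xi2.
Qed.

End Composition.

Section IntegralDomain.
Variable K : fieldType.
Local Notation fps := (Defs.fps K).

(* [(i, d - i)] is the first nonzero coefficient of [F] in the order by total
   degree [d], then by the exponent [i] of [xi1]. *)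
Definition lowest_coef (F : fps) d i :=
  [/\ (i <= d)%N, F i (d - i)%N != 0, ordge F d &
      forall i', (i' < i)%N -> F i' (d - i')%N = 0].

Lemma lowest_coefP (F : fps) : F <> 0 -> exists d i, lowest_coef F d i.
Proof.
move=> F_neq0.
pose P d := [exists i : 'I_d.+1, F i (d - i)%N != 0].
have P_diag i j : F i j != 0 -> P (i + j)%N.
  have ij : (i < (i + j).+1)%N by rewrite ltnS leq_addr.
  by move=> Fij; apply/existsP; exists (Ordinal ij); rewrite /= addKn.
have exP : exists d, P d.
  apply: boolp.contrapT => noP; apply: F_neq0; apply: fps_ext => i j.
  apply/eqP; apply: contraT => /P_diag Pij; exfalso.
  by apply: noP; exists (i + j)%N.
have [d Pd d_min] := find_ex_minn exP.
have exi : exists i, (i <= d)%N && (F i (d - i)%N != 0).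
  by case/existsP: Pd => i Fi; exists (nat_of_ord i); rewrite Fi -ltnS ltn_ord.
have [i /andP [id Fi] i_min] := find_ex_minn exi.
exists d, i; split => // [i' j' ij|i' ii'].
  by apply/eqP; apply: contraT => /P_diag /d_min; rewrite leqNgt ij.
apply/eqP; apply: contraT => Fi'; have := i_min i'.
by rewrite Fi' andbT (leq_trans (ltnW ii') id) leqNgt ii' => /(_ isT).
Qed.

Lemma fcoefM_lowest (F G : fps) dF iF dG iG :
  lowest_coef F dF iF -> lowest_coef G dG iG ->
  (F * G) (iF + iG)%N (dF - iF + (dG - iG))%N =
  F iF (dF - iF)%N * G iG (dG - iG)%N.
Proof.
move=> [iFd _ F_ord F_min] [iGd _ G_ord G_min].
set jF := (dF - iF)%N; set jG := (dG - iG)%N.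
have other a b : (a <= iF + iG)%N -> (b <= jF + jG)%N -> (a != iF) || (b != jF) ->
    F a b * G (iF + iG - a)%N (jF + jG - b)%N = 0.
  move=> aI bJ ab.
  have [abd|abd] := ltnP (a + b) dF; first by rewrite F_ord ?mul0r.
  case/boolP: (a + b == dF)%N => [/eqP abF|abF]; last first.
    by rewrite G_ord ?mulr0 //; move: abd abF; rewrite /jF /jG; lia.
  have [aF|] := ltnP a iF; first by rewrite (_ : b = dF - a)%N ?F_min ?mul0r //; lia.
  rewrite leq_eqVlt => /orP [/eqP aF|aF].
    by move: ab; rewrite -aF eqxx /= => /eqP []; rewrite /jF; lia.
  rewrite (_ : (jF + jG - b)%N = dG - (iF + iG - a))%N; last by rewrite /jF /jG; lia.
  by rewrite G_min ?mulr0 //; lia.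
have iF_lt : (iF < (iF + iG).+1)%N by rewrite ltnS leq_addr.
have jF_lt : (jF < (jF + jG).+1)%N by rewrite ltnS leq_addr.
rewrite fcoefM (bigD1 (Ordinal iF_lt)) //= [X in _ + X]big1 ?addr0; last first.
  move=> a /eqP aF; apply: big1 => b _; rewrite other -1?ltnS //.
  by apply/orP; left; apply/eqP => E; apply: aF; apply: val_inj.
rewrite (bigD1 (Ordinal jF_lt)) //= [X in _ + X]big1 ?addr0; last first.
  move=> b /eqP bF; rewrite other ?leq_addr -1?ltnS //.
  by apply/orP; right; apply/eqP => E; apply: bF; apply: val_inj.
by rewrite !addKn.
Qed.

Lemma fps_mul_eq0 (F G : fps) : F * G = 0 -> F = 0 \/ G = 0.
Proof.
move=> FG0; case: (boolp.EM (F = 0)) => [|F_neq0]; first by left.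
case: (boolp.EM (G = 0)) => [|G_neq0]; first by right.
have [dF [iF lowF]] := lowest_coefP F_neq0.
have [dG [iG lowG]] := lowest_coefP G_neq0.
have [_ coefF_neq0 _ _] := lowF; have [_ coefG_neq0 _ _] := lowG.
have := fcoefM_lowest lowF lowG; rewrite FG0 fcoef0 => /esym/eqP.
by rewrite mulf_eq0 (negbTE coefF_neq0) (negbTE coefG_neq0).
Qed.

End IntegralDomain.

Section ExpLog.
Variable K : numFieldType.
Local Notation fps := (Defs.fps K).

Lemma fps_eq0_from_derivs (G : fps) :
  d1 G = 0 -> d2 G = 0 -> G 0%N 0%N = 0 -> G = 0.
Proof.
move=> d1G d2G G0; apply: fps_ext => [[|i]] j.
  case: j => [|j] //.
  have := congr1 (fun H => H 0%N j) d2G; rewrite /d2 fcoef0 => /eqP.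
  by rewrite mulrn_eq0 /= => /eqP.
have := congr1 (fun H => H i j) d1G; rewrite /d1 fcoef0 => /eqP.
by rewrite mulrn_eq0 /= => /eqP.
Qed.

Definition expm1_div (e : fps) : fps :=
  fsum (fun n => fpsC (((n.+1)`!%:R)^-1) * e ^+ n).

Lemma log1p_divE (G : fps) :
  log1p_div G = fsum (fun m => fpsC ((-1) ^+ m / (m.+1)%:R) * G ^+ m).
Proof. by apply: fps_ext => i j; apply: eq_bigr => m _; rewrite fcoefCM fpowE. Qed.

Lemma fsum_pow0 (c : nat -> K) : fsum (fun n => fpsC (c n) * (0 : fps) ^+ n) = fpsC (c 0%N).
Proof.
apply: fps_ext => i j; rewrite /fsum big_ord_recl big1 ?addr0 ?expr0 ?mulr1 //.
by move=> n _; rewrite expr0n /= mulr0.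
Qed.

Lemma sums_exp (e : fps) : ordge e 1 ->
  sums (fun n => fpsC ((n`!%:R)^-1) * e ^+ n) (1 + e * expm1_div e).
Proof.
move=> e0; pose E n := fpsC ((n`!%:R)^-1) * e ^+ n.
have -> : 1 + e * expm1_div e = E 0%N + e * expm1_div e.
  by rewrite /E fact0 invr1 fpsC1 mulr1.
apply: (@sums_shift _ E).
apply: sums_ext (sumsMl e (sums_fsum (summable_scale _ (summable_pow e0)))) => n.
by rewrite /E exprS; ring.
Qed.

Lemma invfactS_natS n : ((n.+1)`!%:R : K)^-1 * (n.+1)%:R = (n`!%:R)^-1.
Proof. by rewrite factS natrM invfM mulrAC mulVf ?mul1r // pnatr_eq0. Qed.

Lemma der_exp_term D (e : fps) n : derivation D ->
  D (fpsC (((n.+1)`!%:R)^-1) * e ^+ n.+1) = D e * (fpsC ((n`!%:R)^-1) * e ^+ n).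
Proof.
move=> D_der; rewrite (derCM D_der) (derX D_der) mulrn_fpsC mulrA -fpsCM.
by rewrite invfactS_natS; ring.
Qed.

Lemma der_exp D (e : fps) : derivation D -> ordge e 1 ->
  D (e * expm1_div e) = D e * (1 + e * expm1_div e).
Proof.
move=> D_der e0; have expS := sums_exp e0.
have := sums_unique (sums_ext (fun n => der_exp_term e n D_der)
  (sums_unshift (derS D_der expS))) (sumsMl (D e) expS).
by rewrite (derD D_der) (der1 D_der) add0r /= invr1 fpsC1 expr0 mulr1 (der1 D_der) subr0.
Qed.

Lemma der_log_term D (u : fps) m : derivation D ->
  D (u * (fpsC ((-1) ^+ m / (m.+1)%:R) * u ^+ m)) = (- u) ^+ m * D u.
Proof.
move=> D_der; rewrite mulrCA (derCM D_der) -exprS (derX D_der) mulrn_fpsC mulrA.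
rewrite -fpsCM -mulrA mulVf ?pnatr_eq0 // mulr1 fpsCX fpsCN fpsC1.
by rewrite mulrA -exprMn mulN1r.
Qed.

Lemma der_log1p D (u : fps) : derivation D -> ordge u 1 ->
  (1 + u) * D (u * log1p_div u) = D u.
Proof.
move=> D_der u0; have Nu0 := ordgeN u0.
have logS := sums_fsum (summable_scale (fun m => (-1) ^+ m / (m.+1)%:R) (summable_pow u0)).
have telS := sumsMr (D u) (sums_telescope_pow Nu0); rewrite mul1r in telS.
have := sumsMl (1 + u) (derS D_der (sumsMl u logS)); rewrite -log1p_divE.
move/sums_unique; apply; apply: sums_ext telS => m.
by rewrite der_log_term // exprS; ring.
Qed.

Lemma expm1_div_log1p_div (e : fps) : ordge e 1 ->
  expm1_div e * log1p_div (e * expm1_div e) = 1.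
Proof.
move=> e0; set u := e * expm1_div e; set L := log1p_div u.
have u0 : ordge u 1 by apply: ordgeMr.
have [v uv] : exists v, (1 + u) * v = 1.
  by apply: fps_invertible; rewrite fcoefD fcoef1 (u0 0%N 0%N) ?addr0.
have der_uL D : derivation D -> D (u * L - e) = 0.
  move=> D_der; have -> : D (u * L - e) = v * ((1 + u) * (D (u * L) - D e)).
    by rewrite mulrA [v * _]mulrC uv mul1r (derB D_der).
  by rewrite mulrBr der_log1p // der_exp // -/u; ring.
have uL : u * L = e.
  apply/eqP; rewrite -subr_eq0; apply/eqP; apply: fps_eq0_from_derivs.
  - exact: der_uL _ (@d1_derivation K).
  - exact: der_uL _ (@d2_derivation K).
  - by rewrite fcoefB (@ordgeMr _ u L 1 u0 0%N 0%N) ?(e0 0%N 0%N) ?subr0.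
have : e * (expm1_div e * L - 1) = 0 by rewrite mulrBr mulr1 mulrA uL subrr.
case/fps_mul_eq0 => [e_eq0|]; last by move/eqP; rewrite subr_eq0 => /eqP.
rewrite /L /u /expm1_div e_eq0 mul0r log1p_divE !fsum_pow0.
by rewrite expr0 div1r invr1 fpsC1 mulr1.
Qed.

End ExpLog.

Section EulerMultiples.
Variable K : numFieldType.
Local Notation fps := (Defs.fps K).
Local Notation x1 := (xi1 K).

Lemma lie_Emul (a F : fps) : lie (Emul a) F = a * Eder F.
Proof. by rewrite lieE EderE /=; ring. Qed.

Lemma Emul_vanishing (a : fps) : ordge a 1 -> vanishing_linear_part (Emul a).
Proof.
move=> a0; have a00 := a0 0%N 0%N isT.
by split; rewrite /= ?fcoefN ?fcoef_xi1M ?fcoef_xi2M ?a00 ?oppr0.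
Qed.

(* [Scoef a n] is the cofactor of [a^2] in [Pcoef a n.+1], see [PcoefS]. *)
Fixpoint Pcoef (a : fps) n : fps :=
  if n is n'.+1 then a * (Pcoef a n' + Eder (Pcoef a n')) else 1.
Fixpoint Scoef (a : fps) n : fps :=
  if n is n'.+1 then
    Eder a * Scoef a n' + (Eder a ^+ n' + a * Scoef a n') +
    Eder (Eder a ^+ n' + a * Scoef a n')
  else 0.

Lemma iter_lie_Emul_xi1 (a : fps) n : iter n (lie (Emul a)) x1 = x1 * Pcoef a n.
Proof.
elim: n => [|n IH] /=; first by rewrite mulr1.
by rewrite IH lie_Emul (derM (@Eder_derivation K)) Eder_xi1; ring.
Qed.

Lemma PcoefS (a : fps) n : Pcoef a n.+1 = a * (Eder a ^+ n + a * Scoef a n).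
Proof.
elim: n => [|n IH]; first by rewrite /= (der1 (@Eder_derivation K)); ring.
rewrite (_ : Pcoef a n.+2 = a * (Pcoef a n.+1 + Eder (Pcoef a n.+1))) // IH.
by rewrite (derM (@Eder_derivation K)) /= exprS; ring.
Qed.

Lemma ordge_Pcoef (a : fps) n : ordge a 1 -> ordge (Pcoef a n) n.
Proof.
move=> a0; elim: n => [|n IH] /=; first exact: ordge0.
by rewrite -add1n; apply: ordgeM => //; apply: ordgeD => //; apply: ordge_Eder.
Qed.

Lemma ordge_Scoef (a : fps) n : ordge a 1 -> ordge (Scoef a n.+1) n.
Proof.
move=> a0; have e0 := ordge_Eder a0.
have ord_next m : ordge (Scoef a m.+1) m ->
    ordge (Eder a ^+ m.+1 + a * Scoef a m.+1) m.+1.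
  by move=> Sm; apply: ordgeD; [apply: ordgeX | rewrite -add1n; apply: ordgeM].
elim: n => [|n IH]; first exact: ordge0.
apply: ordgeD; first apply: ordgeD.
- by rewrite -add1n; apply: ordgeM.
- exact: ord_next.
- by apply: ordge_Eder; apply: ord_next.
Qed.

Lemma lie_exp_Emul_xi1 (a : fps) : ordge a 1 ->
  exists T, lie_exp (Emul a) x1 = x1 * (1 + a * (expm1_div (Eder a) + a * T)).
Proof.
move=> a0; set e := Eder a; have e0 : ordge e 1 := ordge_Eder a0.
pose c n : K := ((n.+1)`!%:R)^-1.
pose Q n := fpsC ((n`!%:R)^-1) * Pcoef a n.
have Q_ord : summable Q by apply: summable_scale => n; apply: ordge_Pcoef.
pose tau n := fpsC (c n) * Scoef a n.
have tauS_ord : summable (fun n => tau n.+1).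
  by apply: summable_scale => n; apply: ordge_Scoef.
have tauS : sums tau (fsum (fun n => tau n.+1)).
  exact: sums_shift0 (mulr0 _) (sums_fsum tauS_ord).
exists (fsum (fun n => tau n.+1)).
have -> : lie_exp (Emul a) x1 = x1 * fsum Q.
  rewrite lie_expE.
  apply: (sums_unique (sums_fsum (summable_lie_term x1 (Emul_vanishing a0)))).
  apply: sums_ext (sumsMl x1 (sums_fsum Q_ord)) => n.
  by rewrite /lie_term iter_lie_Emul_xi1 /Q; ring.
congr (_ * _); apply/eqP; rewrite addrC -subr_eq mulrDr mulrA -expr2; apply/eqP.
rewrite [X in _ - X](_ : 1 = Q 0%N); last by rewrite /Q fact0 invr1 fpsC1 mulr1.
apply: (sums_unique (sums_unshift (sums_fsum Q_ord))).
have phiS := sums_fsum (summable_scale c (summable_pow e0)).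
apply: sums_ext (sumsD (sumsMl a phiS) (sumsMl (a ^+ 2) tauS)) => n.
by rewrite /Q PcoefS /tau /c; ring.
Qed.

End EulerMultiples.

Section Generator.
Variable K : numFieldType.
Local Notation fps := (Defs.fps K).
Local Notation x1 := (xi1 K).

Fixpoint powD_rem (a u V : fps) m : fps :=
  if m is m'.+1 then V * u ^+ m' + (u + a * V) * powD_rem a u V m' else 0.

Lemma powD_remE (a u V : fps) m : (u + a * V) ^+ m = u ^+ m + a * powD_rem a u V m.
Proof. by elim: m => [|m IH]; rewrite ?expr0 /= ?mulr0 ?addr0 // !exprS IH; ring. Qed.

Lemma ordge_powD_rem (a u V : fps) m : ordge u 1 -> ordge (u + a * V) 1 ->
  ordge (powD_rem a u V m.+1) m.
Proof.
move=> u0 uaV0; elim: m => [|m IH]; first exact: ordge0.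
by apply: ordgeD; [apply: ordgeMl; apply: ordgeX | rewrite -add1n; apply: ordgeM].
Qed.

Lemma log1p_div_perturb (a u V : fps) : ordge u 1 -> ordge (u + a * V) 1 ->
  exists B, log1p_div (u + a * V) = log1p_div u + a * B.
Proof.
move=> u0 uaV0; pose c m : K := (-1) ^+ m / (m.+1)%:R.
pose beta m := fpsC (c m) * powD_rem a u V m.
have betaS_ord : summable (fun m => beta m.+1).
  by apply: summable_scale => m; apply: ordge_powD_rem.
have betaS : sums beta (fsum (fun m => beta m.+1)).
  exact: sums_shift0 (mulr0 _) (sums_fsum betaS_ord).
exists (fsum (fun m => beta m.+1)); rewrite !log1p_divE; symmetry.
apply: sums_fsumE; first exact: summable_scale (summable_pow uaV0).
have logS := sums_fsum (summable_scale c (summable_pow u0)).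
by apply: sums_ext (sumsD logS (sumsMl a betaS)) => m; rewrite /beta powD_remE; ring.
Qed.

Lemma expm1_div_coef00 (e : fps) : expm1_div e 0%N 0%N = 1.
Proof. by rewrite /expm1_div /fsum big_ord1 fcoefCM expr0 fcoef1 /= invr1 mulr1. Qed.

(* [f = a w] with [w] a unit and [f log (1 + E.f) / E.f = a + a^2 q]. *)
Lemma Emul_generator_mod_f2 (a f : fps) : ordge a 1 ->
  lie_exp (Emul a) x1 = x1 * (1 + f) ->
  exists r, a - f * log1p_div (Eder f) = r * f ^+ 2.
Proof.
move=> a0 expf; have [T expT] := lie_exp_Emul_xi1 a0.
set e := Eder a in expT; have e0 : ordge e 1 := ordge_Eder a0.
set phi := expm1_div e in expT; set w := phi + a * T in expT.
have fE : f = a * w by apply: (addrI 1); apply: xi1_mulI; rewrite -expf.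
have [v wv] : exists v, w * v = 1.
  apply: fps_invertible; rewrite /w /phi fcoefD expm1_div_coef00.
  by rewrite (@ordgeMr _ a T 1 a0 0%N 0%N) ?addr0.
set u := e * phi; have u0 : ordge u 1 by apply: ordgeMr.
have Ef : Eder f = u + a * (e * T + Eder w).
  by rewrite fE (derM (@Eder_derivation K)) /u /e /w; ring.
have [B logB] : exists B, log1p_div (Eder f) = log1p_div u + a * B.
  have Ef0 : ordge (Eder f) 1 by apply: ordge_Eder; rewrite fE; apply: ordgeMr.
  by rewrite Ef; apply: log1p_div_perturb => //; rewrite -Ef.
pose q := T * log1p_div u + w * B.
exists (- q * v ^+ 2); rewrite logB fE.
transitivity (a * (1 - phi * log1p_div u) - a ^+ 2 * q); first by rewrite /q /w; ring.
rewrite expm1_div_log1p_div // subrr mulr0 sub0r.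
by rewrite -[LHS]mulr1 -(expr1n _ 2) -wv; ring.
Qed.

End Generator.

Theorem mainTheorem17 (phi : fmap C) (lam : C) (p : nat) (X : vfield C)
    (f : fps C) (s : nat) :
  convergent phi.1 -> convergent phi.2 ->
  phi.1 0%N 0%N = 0 -> phi.2 0%N 0%N = 0 ->
  (lam != 0 /\ linpart phi lam 0 0 lam^-1) \/ linpart phi 0 (-1) (-1) 0 ->
  (0 < p)%N ->
  linpart (miter p phi) 1 0 0 1 ->
  mcomp (mcomp (@msigma C) (mcomp phi (@msigma C))) phi = @midm C ->
  fcomp hfi phi.1 phi.2 = hfi ->
  vanishing_linear_part X ->
  fexp X = miter p phi ->
  fmul (@xi1 C) f = fsub (miter p phi).1 (@xi1 C) ->
  fdvd (fpow hfi s) f -> ~ fdvd (fpow hfi s.+1) f ->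
  exists g : fps C,
    fmul (fpow hfi s) (fsub X.1 (fmul (fmul f (log1p_div (Eder f))) (Efield C).1))
      = fmul (fmul g (fpow f 2)) (Efield C).1 /\
    fmul (fpow hfi s) (fsub X.2 (fmul (fmul f (log1p_div (Eder f))) (Efield C).2))
      = fmul (fmul g (fpow f 2)) (Efield C).2.
Proof.
move=> _ _ phi10 phi20 _ _ _ _ phi_h X0 expX fE _ _.
have [phiM _ _] := miter_first_integral p phi10 phi20 phi_h.
have exp1 : lie_exp X (xi1 C) = (miter p phi).1 by rewrite -expX.
have exp2 : lie_exp X (xi2 C) = (miter p phi).2 by rewrite -expX.
have exp_h : lie_exp X (xi1 C * xi2 C) = xi1 C * xi2 C.
  by rewrite lie_expM // exp1 exp2 phiM.
have [a a0 XE] := lie_xi1xi2_eq0 X0 (lie_exp_fixed X0 exp_h).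
have [r Hr] : exists r, a - f * log1p_div (Eder f) = r * f ^+ 2.
  apply: Emul_generator_mod_f2 a0 _.
  by rewrite -XE exp1 mulrDr mulr1 [_ * f]fE addrC subrK.
set L := f * log1p_div (Eder f) in Hr *.
exists (hfi ^+ s * r); rewrite XE !fpowE; split.
- have E1 : hfi ^+ s * (xi1 C * a - L * xi1 C) = hfi ^+ s * r * f ^+ 2 * xi1 C.
    by transitivity (hfi ^+ s * (a - L) * xi1 C); [ring | rewrite Hr; ring].
  exact: E1.
- have E2 : hfi ^+ s * (- (xi2 C * a) - L * - xi2 C) = hfi ^+ s * r * f ^+ 2 * - xi2 C.
    by transitivity (hfi ^+ s * (a - L) * - xi2 C); [ring | rewrite Hr; ring].
  exact: E2.
Qed.
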